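(* Let $M_\sharp\in\mathbb{R}^{d_1\times d_2}$ have rank $r$ with compact SVD $M_\sharp=U\Lambda V^\top$, and set $X_\sharp=U\sqrt\Lambda$, $Y_\sharp=\sqrt\Lambda V^\top$. Let $\mathcal{A}\colon\mathbb{R}^{d_1\times d_2}\to\mathbb{R}^m$ be linear and $b\in\mathbb{R}^m$, and suppose there exist $\mathcal{I}\subset\{1,\dots,m\}$ and $\kappa_3>0$ with (i) $b_i=\mathcal{A}(M_\sharp)_i$ for all $i\notin\mathcal{I}$, and (ii) $\kappa_3\|W\|_F\le\frac1m\|\mathcal{A}_{\mathcal{I}^c}(W)\|_1-\frac1m\|\mathcal{A}_{\mathcal{I}}(W)\|_1$ for every $W$ of rank at most $2r$. Let $f(X,Y)=\frac1m\|\mathcal{A}(XY)-b\|_1$. Fix $\nu>0$. Then for all $X\in\mathbb{R}^{d_1\times r}$, $Y\in\mathbb{R}^{r\times d_2}$ with $$\max\{\|X-X_\sharp\|_F,\|Y-Y_\sharp\|_F\}\le\nu\sqrt{\sigma_r(M_\sharp)},\qquad\mathrm{dist}\big((X,Y),\mathcal{D}^*(M_\sharp)\big)\le\frac{\sqrt{\sigma_r(M_\sharp)}}{1+2(1+\sqrt2)\nu},$$ we have $$f(X,Y)-f(X_\sharp,Y_\sharp)\ge\frac{\kappa_3\sqrt{\sigma_r(M_\sharp)}}{2+4(1+\sqrt2)\nu}\,\mathrm{dist}\big((X,Y),\mathcal{D}^*(M_\sharp)\big).$$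
   Context: For $\mathcal{J}\subset\{1,\dots,m\}$, $\mathcal{A}_{\mathcal{J}}(W)=(\mathcal{A}(W)_i)_{i\in\mathcal{J}}$. $\mathcal{D}^*(M_\sharp)=\{(X_\sharp A,A^{-1}Y_\sharp):A\in GL(r)\}$ and $\mathrm{dist}((X,Y),\mathcal{D}^*(M_\sharp))=\inf_{A\in GL(r)}\sqrt{\|X-X_\sharp A\|_F^2+\|Y-A^{-1}Y_\sharp\|_F^2}$. $\sigma_r$ is the $r$-th largest singular value. *)

(* matrices over an arbitrary real closed field R
   (needed for Num.sqrt); the paper's setting is R = the reals. *)
From HB Require Import structures.
From mathcomp Require Import all_boot all_order all_algebra.
Set Implicit Arguments. Unset Strict Implicit. Unset Printing Implicit Defensive.
Import Order.TTheory GRing.Theory Num.Theory.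
Local Open Scope ring_scope.

Definition frob (R : rcfType) (p q : nat) (W : 'M[R]_(p, q)) : R :=
  Num.sqrt (\sum_(i < p) \sum_(j < q) W i j ^+ 2).

Definition l1_on (R : rcfType) (m : nat) (J : {set 'I_m}) (v : 'cV[R]_m) : R :=
  \sum_(i in J) `|v i 0|.

Definition l1 (R : rcfType) (m : nat) (v : 'cV[R]_m) : R :=
  \sum_(i < m) `|v i 0|.

Definition lossf (R : rcfType) (d1 d2 r m : nat)
  (A : {linear 'M[R]_(d1, d2) -> 'cV[R]_m}) (b : 'cV[R]_m)
  (X : 'M[R]_(d1, r)) (Y : 'M[R]_(r, d2)) : R :=
  m%:R^-1 * l1 (A (X *m Y) - b).

(* the quantity whose infimum over A in GL(r) defines dist((X,Y), D^*(M#)) *)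
Definition dist_val (R : rcfType) (d1 d2 r : nat)
  (Xs X : 'M[R]_(d1, r)) (Ys Y : 'M[R]_(r, d2)) (G : 'M[R]_r) : R :=
  Num.sqrt (frob (X - Xs *m G) ^+ 2 + frob (Y - invmx G *m Ys) ^+ 2).

(* d = dist((X,Y), D^*(M#)) = inf_{G in GL(r)} dist_val G, stated as
   "d is the greatest lower bound" (R need not be complete in general). *)
Definition is_dist (R : rcfType) (d1 d2 r : nat)
  (Xs X : 'M[R]_(d1, r)) (Ys Y : 'M[R]_(r, d2)) (d : R) : Prop :=
  (forall G : 'M[R]_r, G \in unitmx -> d <= dist_val Xs X Ys Y G) /\
  (forall e : R, (forall G : 'M[R]_r, G \in unitmx -> e <= dist_val Xs X Ys Y G) ->
     e <= d).

(* the r-th (last) entry of a row vector of length r, i.e. the r-th largest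
   singular value when s is the nonincreasing diagonal of Lambda *)
Definition last_entry (R : rcfType) (r : nat) (s : 'rV[R]_r) : R :=
  nth 0 [seq s 0 i | i <- enum 'I_r] r.-1.

From HB Require Import structures.
From mathcomp Require Import all_boot all_order all_algebra.
From mathcomp Require Import ring lra.
From Stdlib Require Import Classical.
Import Order.TTheory GRing.Theory Num.Theory.
Local Open Scope ring_scope.
Set Implicit Arguments. Unset Strict Implicit. Unset Printing Implicit Defensive.

(* Write g = sqrt(sigma_r), D = diag(sqrt s), so X# = U D, Y# = D V^T,
   X# Y# = M, and put E = X Y - M, k = 1 + 2(1 + sqrt 2) nu.  The proof
   combines three estimates.
   (1) Loss gap: E has rank <= 2r, so hypothesis (ii), together with
       b = A(M) off I, gives f(X,Y) - f(X#,Y#) >= kappa3 |E|_F.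
   (2) Distance from the residual: if the "coordinate" matrices U^T X and
       V^T Y^T are bounded below by c (c |W|_F <= |P W|_F for all W), then
       G = D^-1 U^T X is invertible and dist_val G <= |E|_F / c, hence
       dist <= |E|_F / c.
   (3) Local conditioning: under the radius hypotheses both coordinate
       matrices are bounded below by c = g / (2k).  For nu <= 3/4 this is a
       direct perturbation of X# = U D; for nu > 3/4 one perturbs instead a
       nearly optimal aligned point X# G0, which exists because dist < 3g/(2k).
   The theorem is (1) combined with (2) at c = g / (2k). *)

Section FrobeniusNorm.
Variable R : rcfType.

Definition sqnorm (p q : nat) (W : 'M[R]_(p, q)) : R :=
  \sum_(i < p) \sum_(j < q) W i j ^+ 2.
Definition fdot (p q : nat) (A B : 'M[R]_(p, q)) : R := \tr (A^T *m B).

Lemma sqnorm_ge0 p q (W : 'M[R]_(p, q)) : 0 <= sqnorm W.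
Proof. by apply: sumr_ge0 => i _; apply: sumr_ge0 => j _; exact: sqr_ge0. Qed.

Lemma sqnorm_fdot p q (W : 'M[R]_(p, q)) : sqnorm W = fdot W W.
Proof.
rewrite /sqnorm /fdot /mxtrace exchange_big; apply: eq_bigr => j _; rewrite mxE.
by apply: eq_bigr => i _; rewrite !mxE expr2.
Qed.

Lemma fdotC p q (A B : 'M[R]_(p, q)) : fdot A B = fdot B A.
Proof. by rewrite /fdot -mxtrace_tr trmx_mul trmxK. Qed.

Lemma fdotDr p q (A B C : 'M[R]_(p, q)) : fdot A (B + C) = fdot A B + fdot A C.
Proof. by rewrite /fdot mulmxDr mxtraceD. Qed.

Lemma fdotZr p q a (A B : 'M[R]_(p, q)) : fdot A (a *: B) = a * fdot A B.
Proof. by rewrite /fdot -scalemxAr mxtraceZ. Qed.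

Lemma fdotNr p q (A B : 'M[R]_(p, q)) : fdot A (- B) = - fdot A B.
Proof. by rewrite /fdot mulmxN raddfN. Qed.

Lemma fdotDl p q (A B C : 'M[R]_(p, q)) : fdot (B + C) A = fdot B A + fdot C A.
Proof. by rewrite fdotC fdotDr !(fdotC A). Qed.

Lemma fdotZl p q a (A B : 'M[R]_(p, q)) : fdot (a *: B) A = a * fdot B A.
Proof. by rewrite fdotC fdotZr fdotC. Qed.

Lemma fdotNl p q (A B : 'M[R]_(p, q)) : fdot (- B) A = - fdot B A.
Proof. by rewrite fdotC fdotNr fdotC. Qed.

Lemma sqnormD p q (A B : 'M[R]_(p, q)) :
  sqnorm (A + B) = sqnorm A + sqnorm B + 2 * fdot A B.
Proof. rewrite !sqnorm_fdot fdotDl !fdotDr (fdotC B A); ring. Qed.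

Lemma sqnormZ p q a (A : 'M[R]_(p, q)) : sqnorm (a *: A) = a ^+ 2 * sqnorm A.
Proof. rewrite !sqnorm_fdot fdotZl fdotZr; ring. Qed.

Lemma sqnormN p q (A : 'M[R]_(p, q)) : sqnorm (- A) = sqnorm A.
Proof. rewrite !sqnorm_fdot fdotNl fdotNr; ring. Qed.

(* Cauchy-Schwarz, from the nonnegativity of |b A - c B|^2 and
   |c A - a B|^2 (a = |A|^2, b = |B|^2, c = <A,B>), and of |A -+ B|^2 for
   the degenerate case a = b = 0. *)
Lemma fdot_CS p q (A B : 'M[R]_(p, q)) : fdot A B ^+ 2 <= sqnorm A * sqnorm B.
Proof.
have h1 := sqnorm_ge0 (sqnorm B *: A - fdot A B *: B).
have h2 := sqnorm_ge0 (sqnorm A *: B - fdot A B *: A).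
have h3 := sqnorm_ge0 (A - B).
have h4 := sqnorm_ge0 (A + B).
move: h1 h2 h3 h4.
rewrite !sqnormD !sqnormN !sqnormZ !fdotNr !fdotZr !fdotZl (fdotC B A).
rewrite !(sqnorm_fdot A) !(sqnorm_fdot B).
set a := fdot A A; set b := fdot B B; set c := fdot A B => h1 h2 h3 h4.
have a_ge0 : 0 <= a by rewrite /a -sqnorm_fdot sqnorm_ge0.
have b_ge0 : 0 <= b by rewrite /b -sqnorm_fdot sqnorm_ge0.
have [a0 | a_neq0] := eqVneq a 0.
  have [b0 | b_neq0] := eqVneq b 0; first by rewrite a0 b0 in h3 h4 *; nra.
  have b_gt0 : 0 < b by rewrite lt0r b_neq0.
  rewrite a0 in h2 *; nra.
have a_gt0 : 0 < a by rewrite lt0r a_neq0.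
nra.
Qed.

Lemma frobE p q (W : 'M[R]_(p, q)) : frob W = Num.sqrt (sqnorm W).
Proof. by []. Qed.

Lemma frob0 p q : frob (0 : 'M[R]_(p, q)) = 0.
Proof. by rewrite frobE /sqnorm big1 ?sqrtr0 // => i _; rewrite big1 // => j _; rewrite mxE expr0n. Qed.

Lemma frob_ge0 p q (W : 'M[R]_(p, q)) : 0 <= frob W.
Proof. exact: sqrtr_ge0. Qed.

Lemma sqr_frob p q (W : 'M[R]_(p, q)) : frob W ^+ 2 = sqnorm W.
Proof. by rewrite sqr_sqrtr // sqnorm_ge0. Qed.

Lemma sqrt_le_of (x t : R) : 0 <= t -> x <= t ^+ 2 -> Num.sqrt x <= t.
Proof. by move=> t_ge0 h; rewrite -(ger0_norm t_ge0) -sqrtr_sqr; exact: ler_wsqrtr. Qed.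

Lemma fdot_le p q (A B : 'M[R]_(p, q)) : fdot A B <= frob A * frob B.
Proof.
have := fdot_CS A B; rewrite -!sqr_frob -exprMn => h.
apply: le_trans (ler_norm _) _; rewrite -sqrtr_sqr.
by apply: sqrt_le_of => //; rewrite mulr_ge0 ?frob_ge0.
Qed.

Lemma frobD p q (A B : 'M[R]_(p, q)) : frob (A + B) <= frob A + frob B.
Proof.
rewrite {1}frobE; apply: sqrt_le_of; first by rewrite addr_ge0 ?frob_ge0.
rewrite sqnormD -!sqr_frob sqrrD; have := fdot_le A B; lra.
Qed.

Lemma frobN p q (A : 'M[R]_(p, q)) : frob (- A) = frob A.
Proof. by rewrite !frobE sqnormN. Qed.

Lemma frobB p q (A B : 'M[R]_(p, q)) : frob (A - B) <= frob A + frob B.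
Proof. by rewrite -(frobN B) frobD. Qed.

Lemma frobD_ge p q (A B : 'M[R]_(p, q)) : frob A - frob B <= frob (A + B).
Proof. by have := frobD (A + B) (- B); rewrite addrK frobN; lra. Qed.

Lemma frob_tr p q (A : 'M[R]_(p, q)) : frob A^T = frob A.
Proof.
rewrite /frob exchange_big; congr Num.sqrt.
by apply: eq_bigr => i _; apply: eq_bigr => j _; rewrite mxE.
Qed.

Lemma frob_eq0 p q (W : 'M[R]_(p, q)) : frob W = 0 -> W = 0.
Proof.
move=> /eqP; rewrite frobE sqrtr_eq0 => W_le0.
have W0 : sqnorm W = 0 by apply/eqP; rewrite eq_le W_le0 sqnorm_ge0.
apply/matrixP => i j; rewrite mxE.
have row0 : \sum_(j < q) W i j ^+ 2 = 0.
  by apply: (psumr_eq0P _ W0) => // k _; apply: sumr_ge0 => l _; exact: sqr_ge0.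
have : W i j ^+ 2 = 0 by apply: (psumr_eq0P _ row0) => // k _; exact: sqr_ge0.
by move/eqP; rewrite sqrf_eq0 => /eqP.
Qed.

(* Submultiplicativity, from Cauchy-Schwarz on each entry of the product. *)
Lemma sum_CS n (a b : 'I_n -> R) :
  (\sum_k a k * b k) ^+ 2 <= (\sum_k a k ^+ 2) * (\sum_k b k ^+ 2).
Proof.
have := fdot_CS (\row_k a k) (\row_k b k).
have -> : fdot (\row_k a k) (\row_k b k) = \sum_k a k * b k.
  by rewrite /fdot /mxtrace; apply: eq_bigr => k _; rewrite !mxE big_ord1 !mxE.
have row_sqnorm c : sqnorm (\row_k c k) = \sum_k c k ^+ 2.
  by rewrite /sqnorm big_ord1; apply: eq_bigr => k _; rewrite mxE.
by rewrite !row_sqnorm.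
Qed.

Lemma frobM p q t (A : 'M[R]_(p, q)) (B : 'M[R]_(q, t)) :
  frob (A *m B) <= frob A * frob B.
Proof.
rewrite -sqrtrM ?sqnorm_ge0 //; apply: ler_wsqrtr.
rewrite mulr_suml; apply: ler_sum => i _.
rewrite [X in _ * X]exchange_big /= mulr_sumr; apply: ler_sum => j _.
by rewrite mxE; exact: sum_CS.
Qed.

Lemma sqnorm_orth d r (U : 'M[R]_(d, r)) n (Z : 'M[R]_(r, n)) :
  U^T *m U = 1%:M -> sqnorm (U *m Z) = sqnorm Z.
Proof. by move=> hU; rewrite !sqnorm_fdot /fdot trmx_mul -mulmxA (mulmxA U^T) hU mul1mx. Qed.

Lemma frob_orth d r (U : 'M[R]_(d, r)) n (Z : 'M[R]_(r, n)) :
  U^T *m U = 1%:M -> frob (U *m Z) = frob Z.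
Proof. by move=> hU; rewrite !frobE sqnorm_orth. Qed.

Lemma frob_rorth d r n (V : 'M[R]_(d, r)) (B : 'M[R]_(n, r)) :
  V^T *m V = 1%:M -> frob (B *m V^T) = frob B.
Proof. by move=> hV; rewrite -frob_tr trmx_mul trmxK frob_orth // frob_tr. Qed.

(* Pythagoras for the splitting Z = U U^T Z + (1 - U U^T) Z. *)
Lemma sqnorm_split d r (U : 'M[R]_(d, r)) n (Z : 'M[R]_(d, n)) :
  U^T *m U = 1%:M ->
  sqnorm Z = sqnorm (U^T *m Z) + sqnorm ((1%:M - U *m U^T) *m Z).
Proof.
move=> hU; rewrite -(sqnorm_orth _ hU).
have eZ : Z = U *m (U^T *m Z) + (1%:M - U *m U^T) *m Z.
  by rewrite mulmxBl mul1mx mulmxA addrC subrK.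
rewrite {1}eZ sqnormD.
suff -> : fdot (U *m (U^T *m Z)) ((1%:M - U *m U^T) *m Z) = 0 by rewrite mulr0 addr0.
rewrite /fdot !trmx_mul !mulmxA trmxK -(mulmxA _ U^T) mulmxBr mulmx1.
rewrite !mulmxA hU mul1mx subrr mulmx0 mul0mx.
by rewrite /mxtrace big1 // => i _; rewrite mxE.
Qed.

Lemma frob_contr d r (U : 'M[R]_(d, r)) n (Z : 'M[R]_(d, n)) :
  U^T *m U = 1%:M -> frob (U^T *m Z) <= frob Z.
Proof.
move=> hU; rewrite !frobE; apply: ler_wsqrtr.
by rewrite (sqnorm_split Z hU) lerDl sqnorm_ge0.
Qed.

Lemma frob_diag_ge r (c : 'rV[R]_r) g n (W : 'M[R]_(r, n)) : 0 <= g ->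
  (forall i, g <= c 0 i) -> g * frob W <= frob (diag_mx c *m W).
Proof.
move=> g_ge0 hc; rewrite !frobE -(ger0_norm g_ge0) -sqrtr_sqr -sqrtrM ?sqr_ge0 //.
apply: ler_wsqrtr; rewrite mulr_sumr; apply: ler_sum => i _.
rewrite mulr_sumr; apply: ler_sum => j _; rewrite mul_diag_mx mxE exprMn.
apply: ler_wpM2r; first exact: sqr_ge0.
by rewrite ler_sqr ?nnegrE //; apply: le_trans (hc i).
Qed.

Lemma frob_diag_le r (c : 'rV[R]_r) g n (W : 'M[R]_(r, n)) : 0 <= g ->
  (forall i, `|c 0 i| <= g) -> frob (diag_mx c *m W) <= g * frob W.
Proof.
move=> g_ge0 hc; rewrite !frobE -(ger0_norm g_ge0) -sqrtr_sqr -sqrtrM ?sqr_ge0 //.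
apply: ler_wsqrtr; rewrite mulr_sumr; apply: ler_sum => i _.
rewrite mulr_sumr; apply: ler_sum => j _; rewrite mul_diag_mx mxE exprMn.
apply: ler_wpM2r; first exact: sqr_ge0.
by rewrite -[c 0 i ^+ 2]ger0_norm ?sqr_ge0 // normrX ler_sqr ?nnegrE ?hc.
Qed.

Definition diag_inv r (c : 'rV[R]_r) : 'rV[R]_r := \row_i (c 0 i)^-1.

Lemma diag_invP r (c : 'rV[R]_r) : (forall i, c 0 i != 0) ->
  diag_mx c *m diag_mx (diag_inv c) = 1%:M /\ diag_mx (diag_inv c) *m diag_mx c = 1%:M.
Proof.
move=> hc; suff e : diag_mx c *m diag_mx (diag_inv c) = 1%:M.
  by split => //; rewrite diag_mxC.
rewrite mulmx_diag; apply/matrixP => i j; rewrite !mxE.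
by case: eqP => [->|_]; rewrite ?mulr1n ?mulr0n // mulfV.
Qed.

End FrobeniusNorm.

Section Conditioning.
Variable R : rcfType.

(* P is bounded below by c: |P W|_F >= c |W|_F for every W, i.e. the least
   singular value of P is at least c. *)
Definition bounded_below p r (c : R) (P : 'M[R]_(p, r)) : Prop :=
  forall n (W : 'M[R]_(r, n)), c * frob W <= frob (P *m W).

Definition bounded_above p r (beta : R) (H : 'M[R]_(p, r)) : Prop :=
  forall n (Z : 'M[R]_(r, n)), frob (H *m Z) <= beta * frob Z.

Lemma bounded_below_le p r (c c' : R) (P : 'M[R]_(p, r)) :
  c' <= c -> bounded_below c P -> bounded_below c' P.
Proof. by move=> le_c hP n W; apply: le_trans (hP n W); rewrite ler_wpM2r ?frob_ge0. Qed.

(* If H nearly fixes a diagonal D >= g, i.e. |H D - D|_F <= t, then H is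
   bounded above by 1 + t/g: write H Z = Z + (H D - D) (D^-1 Z). *)
Lemma bounded_above_near_id r (c : 'rV[R]_r) g (H : 'M[R]_r) t :
  0 < g -> (forall i, g <= c 0 i) ->
  frob (H *m diag_mx c - diag_mx c) <= t -> bounded_above (1 + t / g) H.
Proof.
move=> g_gt0 hc ht n Z.
have c_gt0 i : 0 < c 0 i by apply: lt_le_trans (hc i).
have [eDDi _] := diag_invP (fun i => lt0r_neq0 (c_gt0 i)).
set D := diag_mx c; set Di := diag_mx (diag_inv c); set F := H *m D - D.
have eHZ : H *m Z = Z + F *m (Di *m Z).
  by rewrite /F mulmxBl !mulmxA -!(mulmxA _ _ Di) eDDi mulmx1 mul1mx addrC subrK.
have hDi : frob (Di *m Z) <= g^-1 * frob Z.
  apply: frob_diag_le => [|i]; first by rewrite invr_ge0 ltW.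
  by rewrite mxE normfV ger0_norm ?(ltW (c_gt0 i)) // lef_pV2 ?posrE ?c_gt0.
have hFDi : frob (F *m (Di *m Z)) <= t * (g^-1 * frob Z).
  apply: le_trans (frobM _ _) _; apply: le_trans (ler_wpM2l (frob_ge0 F) hDi) _.
  by apply: ler_wpM2r => //; rewrite mulr_ge0 ?invr_ge0 ?frob_ge0 // ltW.
rewrite eHZ; apply: le_trans (frobD _ _) _.
by rewrite mulrDl mul1r lerD2l -mulrA.
Qed.

Lemma perturbed_factor_bounded_below d r (U : 'M[R]_(d, r)) (c : 'rV[R]_r) g
    (H Hi : 'M[R]_r) t e (X : 'M[R]_(d, r)) :
  U^T *m U = 1%:M -> 0 < g -> (forall i, g <= c 0 i) -> Hi *m H = 1%:M ->
  frob (Hi *m diag_mx c - diag_mx c) <= t ->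
  frob (X - U *m diag_mx c *m H) <= e ->
  bounded_below (g / (1 + t / g) - e) (U^T *m X).
Proof.
move=> hU g_gt0 hc hHi ht he n W.
set D := diag_mx c; set DX := X - U *m D *m H; set beta := 1 + t / g.
have beta_gt0 : 0 < beta.
  have := divr_ge0 (le_trans (frob_ge0 _) ht) (ltW g_gt0); rewrite /beta; lra.
have eX : U^T *m X *m W = D *m (H *m W) + U^T *m DX *m W.
  by rewrite -{1}(subrK (U *m D *m H) X) -/DX mulmxDr mulmxDl !mulmxA hU mul1mx addrC.
have hD : g * frob (H *m W) <= frob (D *m (H *m W)) by apply: frob_diag_ge; rewrite ?ltW.
have hHW : frob W <= beta * frob (H *m W).
  by rewrite -{1}(mul1mx W) -hHi -mulmxA; exact: bounded_above_near_id.
have hDX : frob (U^T *m DX *m W) <= e * frob W.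
  apply: le_trans (frobM _ _) _; apply: ler_wpM2r; first exact: frob_ge0.
  exact: le_trans (frob_contr _ hU) he.
have hgW : g / beta * frob W <= g * frob (H *m W).
  rewrite mulrAC ler_pdivrMr // -mulrA; apply: ler_wpM2l; [exact: ltW | by rewrite mulrC].
rewrite eX; apply: le_trans _ (frobD_ge _ _); rewrite mulrBl; lra.
Qed.

Lemma conditioning_from_alignment d1 d2 r (U : 'M[R]_(d1, r)) (V : 'M[R]_(d2, r))
    (c : 'rV[R]_r) g (G : 'M[R]_r) t e (X : 'M[R]_(d1, r)) (Y : 'M[R]_(r, d2)) :
  U^T *m U = 1%:M -> V^T *m V = 1%:M -> 0 < g -> (forall i, g <= c 0 i) ->
  G \in unitmx ->
  frob (diag_mx c *m G - diag_mx c) <= t ->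
  frob (invmx G *m diag_mx c - diag_mx c) <= t ->
  frob (X - U *m diag_mx c *m G) <= e ->
  frob (Y - invmx G *m (diag_mx c *m V^T)) <= e ->
  bounded_below (g / (1 + t / g) - e) (U^T *m X) /\
  bounded_below (g / (1 + t / g) - e) (V^T *m Y^T).
Proof.
move=> hU hV g_gt0 hc Gu htG htGi heX heY; split.
  exact: perturbed_factor_bounded_below hU g_gt0 hc (mulVmx Gu) htGi heX.
have hGt : G^T *m (invmx G)^T = 1%:M by rewrite -trmx_mul mulVmx // trmx1.
apply: perturbed_factor_bounded_below hV g_gt0 hc hGt _ _.
  by rewrite -(tr_diag_mx c) -trmx_mul -linearB /= frob_tr.
suff -> : Y^T - V *m diag_mx c *m (invmx G)^T = (Y - invmx G *m (diag_mx c *m V^T))^T.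
  by rewrite frob_tr.
by rewrite linearB /= !trmx_mul trmxK tr_diag_mx.
Qed.

(* A square matrix bounded below by c > 0 has trivial kernel, hence is
   invertible. *)
Lemma unitmx_of_bounded_below r (P : 'M[R]_r) c :
  0 < c -> bounded_below c P -> P \in unitmx.
Proof.
move=> c_gt0 hP; rewrite -unitmx_tr -row_free_unit -kermx_eq0 -trmx_eq0.
have PK0 : P *m (kermx P^T)^T = 0.
  have KP : kermx P^T *m P^T = 0 by apply/sub_kermxP.
  by rewrite -(trmxK P) -trmx_mul trmxK KP trmx0.
have := hP _ (kermx P^T)^T; rewrite PK0.
rewrite frob0 pmulr_rle0 // => K_le0.
by apply/eqP/frob_eq0/eqP; rewrite eq_le K_le0 frob_ge0.
Qed.

(* Key estimate (2): if U^T X and V^T Y^T are bounded below by c, then the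
   alignment G = D^-1 U^T X satisfies dist_val G <= |X Y - X# Y#|_F / c.
   Indeed X - X# G = (1 - U U^T) X and Y - G^-1 Y# = (U^T X)^-1 U^T E, and the
   lower bounds turn these into the two orthogonal components of E. *)
Lemma dist_val_le_residual d1 d2 r (U : 'M[R]_(d1, r)) (V : 'M[R]_(d2, r))
    (c : 'rV[R]_r) (X : 'M[R]_(d1, r)) (Y : 'M[R]_(r, d2)) cc :
  U^T *m U = 1%:M -> V^T *m V = 1%:M -> (forall i, c 0 i != 0) -> 0 < cc ->
  bounded_below cc (U^T *m X) -> bounded_below cc (V^T *m Y^T) ->
  exists2 G, G \in unitmx &
    dist_val (U *m diag_mx c) X (diag_mx c *m V^T) Y G <=
    frob (X *m Y - U *m diag_mx c *m (diag_mx c *m V^T)) / cc.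
Proof.
move=> hU hV hc cc_gt0 hP hQ.
set P := U^T *m X; set D := diag_mx c; set Di := diag_mx (diag_inv c).
set E := X *m Y - U *m D *m (D *m V^T).
set Pr := 1%:M - U *m U^T.
have [eDDi eDiD] := diag_invP hc.
have Pu : P \in unitmx by exact: unitmx_of_bounded_below hP.
set G := Di *m P.
have eGi : G *m (invmx P *m D) = 1%:M.
  by rewrite /G -mulmxA (mulmxA P) mulmxV // mul1mx eDiD.
have [Gu _] := mulmx1_unit eGi.
exists G => //; rewrite /dist_val.
have -> : invmx G = invmx P *m D.
  by rewrite -[invmx G]mulmx1 -eGi mulmxA mulVmx // mul1mx.
have eX : X - U *m D *m G = Pr *m X.
  by rewrite /G /Pr mulmxBl mul1mx !mulmxA -(mulmxA U) eDDi mulmx1.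
have eY : Y - invmx P *m D *m (D *m V^T) = invmx P *m (U^T *m E).
  by rewrite /E mulmxBr !mulmxA hU mul1mx -/P mulmxBr mulmxA mulVmx // mul1mx !mulmxA.
have bY : cc * frob (invmx P *m (U^T *m E)) <= frob (U^T *m E).
  by have := hP _ (invmx P *m (U^T *m E)); rewrite -/P (mulmxA P) (mulmxV Pu) mul1mx.
have bX : cc * frob (Pr *m X) <= frob (Pr *m E).
  have ePrE : Pr *m X *m (Y *m V) = Pr *m E *m V.
    rewrite /E /Pr mulmxBr !mulmxBl !mulmxA !mul1mx -(mulmxA U U^T U) hU mulmx1.
    by rewrite subrr subr0.
  have := hQ _ (Pr *m X)^T; rewrite frob_tr -!trmx_mul frob_tr ePrE => h.
  by apply: le_trans h _; rewrite -frob_tr trmx_mul (le_trans (frob_contr _ hV)) ?frob_tr.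
rewrite eX eY; apply: sqrt_le_of; first by rewrite divr_ge0 ?frob_ge0 ?ltW.
rewrite expr_div_n ler_pdivlMr ?exprn_gt0 // (sqr_frob E) (sqnorm_split E hU) -!sqr_frob.
rewrite -/Pr mulrDl -!exprMn !(mulrC _ cc) addrC.
by apply: lerD; rewrite ler_sqr ?nnegrE ?mulr_ge0 ?frob_ge0 ?(ltW cc_gt0).
Qed.

Lemma dist_val_ge_l d1 d2 r (Xs X : 'M[R]_(d1, r)) (Ys Y : 'M[R]_(r, d2)) G :
  frob (X - Xs *m G) <= dist_val Xs X Ys Y G.
Proof.
rewrite /dist_val -{1}(ger0_norm (frob_ge0 (X - Xs *m G))) -sqrtr_sqr.
by apply: ler_wsqrtr; rewrite lerDl sqr_ge0.
Qed.

Lemma dist_val_ge_r d1 d2 r (Xs X : 'M[R]_(d1, r)) (Ys Y : 'M[R]_(r, d2)) G :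
  frob (Y - invmx G *m Ys) <= dist_val Xs X Ys Y G.
Proof.
rewrite /dist_val -{1}(ger0_norm (frob_ge0 (Y - invmx G *m Ys))) -sqrtr_sqr.
by apply: ler_wsqrtr; rewrite lerDr sqr_ge0.
Qed.

Lemma is_dist_approx d1 d2 r (Xs X : 'M[R]_(d1, r)) (Ys Y : 'M[R]_(r, d2)) d e :
  is_dist Xs X Ys Y d -> d < e ->
  exists2 G, G \in unitmx & dist_val Xs X Ys Y G < e.
Proof.
move=> [_ d_glb] d_lt_e; apply: NNPP => no_G.
suff : e <= d by rewrite leNgt d_lt_e.
apply: d_glb => G Gu; rewrite leNgt; apply/negP => lt_G.
by apply: no_G; exists G.
Qed.

End Conditioning.

Section RadiusArithmetic.
Variable R : rcfType.

Lemma sqrt2_ge : (7 / 5 : R) <= Num.sqrt 2.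
Proof.
have h : (0 : R) <= 7 / 5 by lra.
by rewrite -(ger0_norm h) -sqrtr_sqr; apply: ler_wsqrtr; lra.
Qed.

(* The radius factor k = 1 + 2 (1 + sqrt 2) nu of the theorem is at least
   1 + 24/5 nu; the two margins below only use this bound on k. *)
Lemma radius_factor_ge (nu : R) : 0 <= nu -> 1 + 24 / 5 * nu <= 1 + 2 * (1 + Num.sqrt 2) * nu.
Proof. by move=> nu_ge0; have := sqrt2_ge; nra. Qed.

(* For nu <= 3/4, perturbing X# by nu g leaves a margin g/(2k). *)
Lemma small_radius_margin (g nu k : R) : 0 < g -> 0 < nu -> nu <= 3 / 4 ->
  1 + 24 / 5 * nu <= k -> g / (2 * k) <= g - nu * g.
Proof.
move=> g_gt0 nu_gt0 nu_le k_ge; rewrite ler_pdivrMr; last by lra.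
have : 1 <= (1 - nu) * (2 * k) by nra.
nra.
Qed.

(* For nu > 3/4, perturbing an aligned point X# G0 with dist_val G0 <= e,
   e = 3g/(2k), and |D G0 - D|_F <= nu g + e leaves a margin g/(2k). *)
Lemma large_radius_margin (g nu k : R) : 0 < g -> 3 / 4 < nu ->
  1 + 24 / 5 * nu <= k ->
  g / (2 * k) <= g / (1 + (nu * g + 3 * g / (2 * k)) / g) - 3 * g / (2 * k).
Proof.
move=> g_gt0 nu_gt k_ge.
have k_gt0 : 0 < k by lra.
set beta := 1 + (nu * g + 3 * g / (2 * k)) / g.
have e_beta : beta = 1 + nu + 3 / (2 * k).
  by rewrite /beta; field; apply/andP; split; apply/eqP; lra.
have q_le : 3 / (2 * k) <= 3 / (2 * (23 / 5)).
  by rewrite ler_pdivrMr ?mulr_gt0 //; nra.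
have q_gt0 : 0 < 3 / (2 * k) by rewrite divr_gt0 //; lra.
have beta_gt0 : 0 < beta by rewrite e_beta; lra.
have two_beta_le : 2 * beta <= k by rewrite e_beta; lra.
rewrite -subr_ge0.
have -> : g / beta - 3 * g / (2 * k) - g / (2 * k) = g * (k - 2 * beta) / (beta * k).
  by field; apply/andP; split; apply/eqP; lra.
by rewrite divr_ge0 ?mulr_ge0 //; lra.
Qed.

End RadiusArithmetic.

Section LocalConditioning.
Variables (R : rcfType) (d1 d2 r : nat) (U : 'M[R]_(d1, r)) (V : 'M[R]_(d2, r)).
Variables (c : 'rV[R]_r) (g nu : R) (X : 'M[R]_(d1, r)) (Y : 'M[R]_(r, d2)).
Hypotheses (hU : U^T *m U = 1%:M) (hV : V^T *m V = 1%:M).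
Hypotheses (g_gt0 : 0 < g) (c_ge : forall i, g <= c 0 i) (nu_gt0 : 0 < nu).
Local Notation D := (diag_mx c).
Local Notation k := (1 + 2 * (1 + Num.sqrt 2) * nu).
Hypotheses (hX : frob (X - U *m D) <= nu * g) (hY : frob (Y - D *m V^T) <= nu * g).

Let k_ge : 1 + 24 / 5 * nu <= k.
Proof. exact/radius_factor_ge/ltW. Qed.

(* Small radius: perturb (X#, Y#) itself, i.e. take the alignment G = 1. *)
Lemma small_radius_conditioning : nu <= 3 / 4 ->
  bounded_below (g / (2 * k)) (U^T *m X) /\ bounded_below (g / (2 * k)) (V^T *m Y^T).
Proof.
move=> nu_le.
have htG : frob (D *m 1%:M - D) <= 0 by rewrite mulmx1 subrr frob0.
have htGi : frob (invmx 1%:M *m D - D) <= 0 by rewrite invmx1 mul1mx subrr frob0.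
have heX : frob (X - U *m D *m 1%:M) <= nu * g by rewrite mulmx1.
have heY : frob (Y - invmx 1%:M *m (D *m V^T)) <= nu * g by rewrite invmx1 mul1mx.
have [hP hQ] := conditioning_from_alignment hU hV g_gt0 c_ge (unitmx1 _ _) htG htGi heX heY.
have margin := small_radius_margin g_gt0 nu_gt0 nu_le k_ge.
rewrite mul0r addr0 divr1 in hP hQ.
by split; apply: bounded_below_le margin _.
Qed.

(* Large radius: perturb a nearly optimal aligned point (X# G0, G0^-1 Y#),
   which lies within 3g/(2k) of (X, Y) since dist <= g/k. *)
Lemma large_radius_conditioning d : 3 / 4 < nu ->
  is_dist (U *m D) X (D *m V^T) Y d -> d <= g / k ->
  bounded_below (g / (2 * k)) (U^T *m X) /\ bounded_below (g / (2 * k)) (V^T *m Y^T).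
Proof.
move=> nu_gt hd d_le; have k_gt0 : 0 < k by have := k_ge; lra.
set e := 3 * g / (2 * k).
have d_lt : d < e.
  have -> : e = g / k + g / (2 * k) by rewrite /e; field; apply/eqP; lra.
  by apply: le_lt_trans d_le _; rewrite ltrDl divr_gt0 //; lra.
have [G0 G0u hG0] := is_dist_approx hd d_lt.
have heX := le_trans (dist_val_ge_l _ _ _ _ _) (ltW hG0).
have heY := le_trans (dist_val_ge_r _ _ _ _ _) (ltW hG0).
have htG : frob (D *m G0 - D) <= nu * g + e.
  rewrite -(frob_orth _ hU).
  have -> : U *m (D *m G0 - D) = (X - U *m D) - (X - U *m D *m G0).
    by rewrite opprB [RHS]addrC subrKA mulmxBr mulmxA.
  by apply: le_trans (frobB _ _) _; apply: lerD.
have htGi : frob (invmx G0 *m D - D) <= nu * g + e.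
  rewrite -(frob_rorth _ hV).
  have -> : (invmx G0 *m D - D) *m V^T = (Y - D *m V^T) - (Y - invmx G0 *m (D *m V^T)).
    by rewrite opprB [RHS]addrC subrKA mulmxBl mulmxA.
  by apply: le_trans (frobB _ _) _; apply: lerD.
have [hP hQ] := conditioning_from_alignment hU hV g_gt0 c_ge G0u htG htGi heX heY.
have margin := large_radius_margin g_gt0 nu_gt k_ge.
by split; apply: bounded_below_le margin _.
Qed.

Lemma local_conditioning d :
  is_dist (U *m D) X (D *m V^T) Y d -> d <= g / k ->
  bounded_below (g / (2 * k)) (U^T *m X) /\ bounded_below (g / (2 * k)) (V^T *m Y^T).
Proof.
move=> hd d_le; have [nu_le | nu_gt] := lerP nu (3 / 4).
  exact: small_radius_conditioning.
exact: large_radius_conditioning hd d_le.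
Qed.

End LocalConditioning.

Section LossGap.
Variable R : rcfType.

Lemma l1_gap_ge m (I : {set 'I_m}) (v1 v2 : 'cV[R]_m) :
  (forall i, i \notin I -> v2 i 0 = 0) ->
  l1_on (~: I) (v1 - v2) - l1_on I (v1 - v2) <= l1 v1 - l1 v2.
Proof.
move=> v2_off; rewrite /l1_on /l1 !(big_mkcond (fun i => i \in _)) /= -!sumrB.
apply: ler_sum => i _; rewrite in_setC !mxE.
have [iI | iNI] /= := boolP (i \in I); last by rewrite v2_off // !subr0 normr0 subr0.
have := ler_normD (v1 i 0) (v2 i 0 - v1 i 0).
by rewrite addrCA subrr addr0 distrC; lra.
Qed.

Lemma rank_factored_sub_le d1 d2 r (X : 'M[R]_(d1, r)) (Y : 'M[R]_(r, d2))
    (M : 'M[R]_(d1, d2)) :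
  \rank M = r -> (\rank (X *m Y - M)%R <= 2 * r)%N.
Proof.
move=> rkM; apply: leq_trans (_ : \rank (X *m Y) + \rank (- M)%R <= _)%N.
  apply: leq_trans (leq_of_leqif (mxrank_adds_leqif _ _)).
  by apply: mxrankS; apply: addmx_sub_adds; exact: submx_refl.
rewrite mxrank_opp rkM mul2n -addnn leq_add2r.
exact: leq_trans (mxrankM_maxl _ _) (rank_leq_col _).
Qed.

Lemma loss_gap_ge d1 d2 r m (M : 'M[R]_(d1, d2))
    (A : {linear 'M[R]_(d1, d2) -> 'cV[R]_m}) (b : 'cV[R]_m) (I : {set 'I_m})
    (kappa3 : R) (Xs X : 'M[R]_(d1, r)) (Ys Y : 'M[R]_(r, d2)) :
  \rank M = r ->
  (forall i : 'I_m, i \notin I -> b i 0 = A M i 0) ->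
  (forall W : 'M[R]_(d1, d2), (\rank W <= 2 * r)%N ->
     kappa3 * frob W <= m%:R^-1 * l1_on (~: I) (A W) - m%:R^-1 * l1_on I (A W)) ->
  Xs *m Ys = M ->
  kappa3 * frob (X *m Y - M) <= lossf A b X Y - lossf A b Xs Ys.
Proof.
move=> rkM hb hW eM; rewrite /lossf eM -mulrBr.
apply: le_trans (hW _ (rank_factored_sub_le X Y rkM)) _.
rewrite -mulrBr ler_wpM2l ?invr_ge0 ?ler0n //.
have -> : A (X *m Y - M) = (A (X *m Y) - b) - (A M - b) by rewrite linearB opprB addrA subrK.
by apply: l1_gap_ge => i iNI; rewrite !mxE hb // subrr.
Qed.

End LossGap.

Lemma last_entry_min (R : rcfType) r (s : 'rV[R]_r) : (0 < r)%N ->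
  (forall i j : 'I_r, (i <= j)%N -> s 0 j <= s 0 i) ->
  exists j : 'I_r, last_entry s = s 0 j /\ forall i : 'I_r, last_entry s <= s 0 i.
Proof.
move=> r_gt0 s_noninc; have jr : (r.-1 < r)%N by rewrite ltn_predL.
have ej : last_entry s = s 0 (Ordinal jr).
  rewrite /last_entry (nth_map (Ordinal jr)) ?size_enum_ord //.
  by have /= -> := nth_ord_enum (Ordinal jr) (Ordinal jr).
exists (Ordinal jr); split => // i; rewrite ej; apply: s_noninc => /=.
by rewrite -ltnS prednK // ltn_ord.
Qed.

Lemma balanced_factorization (R : rcfType) d1 d2 r (U : 'M[R]_(d1, r))
    (V : 'M[R]_(d2, r)) (s : 'rV[R]_r) :
  (forall i, 0 <= s 0 i) ->
  U *m diag_mx (map_mx Num.sqrt s) *m (diag_mx (map_mx Num.sqrt s) *m V^T) =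
  U *m diag_mx s *m V^T.
Proof.
move=> s_ge0; rewrite !mulmxA -(mulmxA U) mulmx_diag; congr (_ *m diag_mx _ *m _).
by apply/rowP => i; rewrite !mxE -expr2 sqr_sqrtr.
Qed.

Theorem proposition4p7 (R : rcfType) (d1 d2 r m : nat)
  (M : 'M[R]_(d1, d2)) (U : 'M[R]_(d1, r)) (V : 'M[R]_(d2, r)) (s : 'rV[R]_r)
  (A : {linear 'M[R]_(d1, d2) -> 'cV[R]_m}) (b : 'cV[R]_m)
  (I : {set 'I_m}) (kappa3 nu : R) :
  (0 < r)%N ->
  \rank M = r ->
  (* compact SVD M = U Lambda V^T *)
  U^T *m U = 1%:M ->
  V^T *m V = 1%:M ->
  (forall i : 'I_r, 0 < s 0 i) ->
  (forall i j : 'I_r, (i <= j)%N -> s 0 j <= s 0 i) ->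
  M = U *m diag_mx s *m V^T ->
  0 < kappa3 ->
  (forall i : 'I_m, i \notin I -> b i 0 = A M i 0) ->
  (forall W : 'M[R]_(d1, d2), (\rank W <= 2 * r)%N ->
     kappa3 * frob W <= m%:R^-1 * l1_on (~: I) (A W) - m%:R^-1 * l1_on I (A W)) ->
  0 < nu ->
  let Xs := U *m diag_mx (map_mx Num.sqrt s) in
  let Ys := diag_mx (map_mx Num.sqrt s) *m V^T in
  let sigr := last_entry s in
  forall (X : 'M[R]_(d1, r)) (Y : 'M[R]_(r, d2)) (d : R),
  is_dist Xs X Ys Y d ->
  Num.max (frob (X - Xs)) (frob (Y - Ys)) <= nu * Num.sqrt sigr ->
  d <= Num.sqrt sigr / (1 + 2 * (1 + Num.sqrt 2) * nu) ->
  lossf A b X Y - lossf A b Xs Ys >=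
    kappa3 * Num.sqrt sigr / (2 + 4 * (1 + Num.sqrt 2) * nu) * d.
Proof.
move=> r_gt0 rkM hU hV s_gt0 s_noninc eM k3_gt0 hb hW nu_gt0 Xs Ys sigr X Y d hd.
rewrite ge_max => /andP [hX hY] d_le.
have [j [sigr_j sigr_min]] := last_entry_min r_gt0 s_noninc.
set g := Num.sqrt sigr in hX hY d_le *.
have g_gt0 : 0 < g by rewrite sqrtr_gt0 /sigr sigr_j.
have c_ge i : g <= map_mx Num.sqrt s 0 i by rewrite mxE ler_wsqrtr ?sigr_min.
have c_neq0 i : map_mx Num.sqrt s 0 i != 0 by rewrite lt0r_neq0 // (lt_le_trans g_gt0).
have eXY : Xs *m Ys = M by rewrite eM balanced_factorization // => i; exact: ltW.
have gap := loss_gap_ge X Y rkM hb hW eXY.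
have [hP hQ] := local_conditioning hU hV g_gt0 c_ge nu_gt0 hX hY hd d_le.
set cc := g / (2 * (1 + 2 * (1 + Num.sqrt 2) * nu)) in hP hQ.
have k_gt0 : 0 < 1 + 2 * (1 + Num.sqrt 2) * nu.
  by have := radius_factor_ge (ltW nu_gt0); lra.
have cc_gt0 : 0 < cc by rewrite divr_gt0 // mulr_gt0.
have [G Gu hG] := dist_val_le_residual hU hV c_neq0 cc_gt0 hP hQ.
have d_le_E : d <= frob (X *m Y - M) / cc by rewrite -eXY; exact: le_trans (hd.1 G Gu) hG.
have -> : kappa3 * g / (2 + 4 * (1 + Num.sqrt 2) * nu) = kappa3 * cc.
  by rewrite /cc -mulrA; congr (_ * (_ / _)); ring.
apply: le_trans gap; rewrite -mulrA ler_wpM2l ?(ltW k3_gt0) //.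
by rewrite mulrC -ler_pdivlMr.
Qed.
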